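(* Let $f:[0,\infty)\to[0,\infty)$ be a differentiable convex function with $f(0)=0$, let $0<m<M$, and let $\sigma$ be a matrix mean. Then for all $A,B\in\mathbb{P}_n^+$ with spectra contained in $[m,M]$, $$f'(0)(A\sigma B)\le \frac{f(m)}{m}(A\sigma B)\le f(A)\sigma f(B)\le \frac{f(M)}{M}(A\sigma B)\le f'(M)(A\sigma B)$$ and $$f'(0)(A\sigma B)\le \frac{f(m)}{m}(A\sigma B)\le f(A\sigma B)\le \frac{f(M)}{M}(A\sigma B)\le f'(M)(A\sigma B).$$ If $f:[0,\infty)\to[0,\infty)$ is instead a differentiable concave function with $f(0)=0$, all these inequalities are reversed.
   Context: $\mathbb{P}_n$ (resp. $\mathbb{P}_n^+$) denotes the set of $n\times n$ complex positive semidefinite (resp. positive definite) matrices, $I$ is the identity matrix and $\le$ is the Löwner order. For a Hermitian matrix $A$ and a real function $f$ defined on its spectrum, $f(A)$ is defined by functional calculus. ''Spectrum contained in $[m,M]$'' means $mI\le A\le MI$. A matrix mean is a binary operation $\sigma:\mathbb{P}_n\times\mathbb{P}_n\to\mathbb{P}_n$ such that (i) $A\le C$ and $B\le D$ imply $A\sigma B\le C\sigma D$; (ii) $C^*(A\sigma B)C\le (C^*AC)\sigma(C^*BC)$ for all $C$; (iii) if $A_k\downarrow A$ and $B_k\downarrow B$ (decreasing sequences converging) then $A_k\sigma B_k\downarrow A\sigma B$; (iv) $I\sigma I=I$. *)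

From HB Require Import structures.
From mathcomp Require Import all_boot all_order all_algebra.
From mathcomp Require Import sesquilinear spectral.
From mathcomp Require Import complex.
From mathcomp Require Import boolp classical_sets reals topology normedtype derive.

Set Implicit Arguments.
Unset Strict Implicit.
Unset Printing Implicit Defensive.

Import Order.TTheory GRing.Theory Num.Theory.
Import numFieldNormedType.Exports.
Local Open Scope classical_set_scope.
Local Open Scope ring_scope.

Section MatrixDefs.
Variable R : realType.
Local Notation C := R[i].

Definition ctmx n (A : 'M[C]_n) : 'M[C]_n := (map_mx Num.conj A)^T.

(* A \in P_n : Hermitian and <Ax,x> >= 0 for all x (row-vector convention:
   v A v^* with v = x^* ) *)
Definition psdmx n (A : 'M[C]_n) : Prop :=
  A \is hermsymmx /\
  forall v : 'rV[C]_n, 0 <= (v *m A *m (map_mx Num.conj v)^T) 0 0.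

Definition pdmx n (A : 'M[C]_n) : Prop :=
  A \is hermsymmx /\
  forall v : 'rV[C]_n, v != 0 -> 0 < (v *m A *m (map_mx Num.conj v)^T) 0 0.

Definition loewner n (A B : 'M[C]_n) : Prop := psdmx (B - A).

Definition spec_in n (m M : R) (A : 'M[C]_n) : Prop :=
  loewner ((m%:C)%C%:M) A /\ loewner A ((M%:C)%C%:M).

(* functional calculus: A = U^-1 diag(lambda) U (U unitary) gives
   f(A) = U^-1 diag(f(lambda)) U; for Hermitian A the eigenvalues are real *)
Definition mxfun n (f : R -> R) (A : 'M[C]_n) : 'M[C]_n :=
  invmx (spectralmx A)
  *m diag_mx (map_mx (fun z : C => ((f (complex.Re z))%:C)%C) (spectral_diag A))
  *m spectralmx A.

Definition mx_cvg n (u : nat -> 'M[C]_n) (L : 'M[C]_n) : Prop :=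
  forall i j, (complex.Re (u k i j) @[k --> \oo] --> complex.Re (L i j)) /\
              (complex.Im (u k i j) @[k --> \oo] --> complex.Im (L i j)).

Definition mx_decr_to n (u : nat -> 'M[C]_n) (L : 'M[C]_n) : Prop :=
  (forall k, loewner (u k.+1) (u k)) /\ mx_cvg u L.

Definition matrix_mean n (sigma : 'M[C]_n -> 'M[C]_n -> 'M[C]_n) : Prop :=
  (forall A B, psdmx A -> psdmx B -> psdmx (sigma A B)) /\
  (forall A B A' B', psdmx A -> psdmx B -> psdmx A' -> psdmx B' ->
     loewner A A' -> loewner B B' -> loewner (sigma A B) (sigma A' B')) /\
  (forall A B (X : 'M[C]_n), psdmx A -> psdmx B ->
     loewner (ctmx X *m sigma A B *m X)
             (sigma (ctmx X *m A *m X) (ctmx X *m B *m X))) /\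
  (forall (Ak Bk : nat -> 'M[C]_n) A B,
     (forall k, psdmx (Ak k)) -> (forall k, psdmx (Bk k)) ->
     psdmx A -> psdmx B ->
     mx_decr_to Ak A -> mx_decr_to Bk B ->
     mx_decr_to (fun k => sigma (Ak k) (Bk k)) (sigma A B)) /\
  sigma 1%:M 1%:M = 1%:M.

End MatrixDefs.

Definition convex_nonneg (R : realType) (f : R -> R) : Prop :=
  forall x y t : R, 0 <= x -> 0 <= y -> 0 <= t <= 1 ->
    f (t * x + (1 - t) * y) <= t * f x + (1 - t) * f y.

Definition concave_nonneg (R : realType) (f : R -> R) : Prop :=
  forall x y t : R, 0 <= x -> 0 <= y -> 0 <= t <= 1 ->
    t * f x + (1 - t) * f y <= f (t * x + (1 - t) * y).

From HB Require Import structures.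
From mathcomp Require Import all_boot all_order all_algebra.
From mathcomp Require Import sesquilinear spectral.
From mathcomp Require Import complex.
From mathcomp Require Import boolp classical_sets reals topology normedtype derive.
From mathcomp Require Import functions lra.

Set Implicit Arguments.
Unset Strict Implicit.
Unset Printing Implicit Defensive.

Import Order.TTheory GRing.Theory Num.Theory.
Import numFieldNormedType.Exports.
Local Open Scope classical_set_scope.
Local Open Scope ring_scope.

(* Convexity of f together with f 0 = 0 makes x |-> f x / x nondecreasing on
   (0, +oo).  Hence f(m)/m x <= f x <= f(M)/M x on [m, M], and the difference
   quotients of f at 0+ and at M give f'(0) <= f(m)/m and f(M)/M <= f'(M).
   Through the spectral decomposition, c1 x <= f x <= c2 x on [m, M] yields
   c1 X <= f(X) <= c2 X for every Hermitian X with spectrum in [m, M].  The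
   transformer inequality with the scalar matrix sqrt(c) I makes sigma
   positively homogeneous, so sigma preserves the bounds m I <= . <= M I and,
   with monotonicity, turns c1 A <= f(A), c1 B <= f(B) into
   c1 (A sigma B) <= f(A) sigma f(B).  The concave case is the convex one for -f
   at the scalar level; the matrix arguments only need the sandwich bounds. *)

Section ConvexVanishingAtZero.
Variables (R : realType) (f : R -> R).
Hypotheses (f_convex : convex_nonneg f) (f0 : f 0 = 0).

Lemma convex_ratio_le x y : 0 < x -> x <= y -> f x / x <= f y / y.
Proof.
move=> x_gt0 le_xy; have y_gt0 : 0 < y := lt_le_trans x_gt0 le_xy.
have t01 : 0 <= x / y <= 1.
  by rewrite divr_ge0 ?(ltW x_gt0) ?(ltW y_gt0) //= ler_pdivrMr // mul1r.
have := @f_convex y 0 (x / y) (ltW y_gt0) (lexx 0) t01.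
rewrite mulr0 addr0 f0 mulr0 addr0 divfK ?gt_eqF // => le_fx.
by rewrite ler_pdivrMr // mulrAC -mulrA mulrC.
Qed.

Lemma convex_rderive0_le d0 m : 0 < m ->
  h^-1 * (f h - f 0) @[h --> 0^'+] --> d0 -> d0 <= f m / m.
Proof.
move=> m_gt0 df0; rewrite -(cvg_lim _ df0) //.
apply: limr_le; first by apply/cvg_ex; exists d0.
near=> h.
have h_gt0 : 0 < h by near: h; exact: nbhs_right_gt.
have h_lt_m : h < m by near: h; exact: nbhs_right_lt.
by rewrite f0 subr0 mulrC; exact: convex_ratio_le (ltW h_lt_m).
Unshelve. all: by end_near.
Qed.

Lemma convex_ratio_le_derive M : 0 < M -> derivable f M 1 ->
  f M / M <= derive1 f M.
Proof.
move=> M_gt0 dfM; rewrite derive1E; apply: limr_ge; first exact: dfM.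
near=> h.
have h_neq0 : h != 0 by near: h; exact: nbhs_dnbhs_neq.
have h_small : `|h| < M by near: h; exact: (nbhs_dnbhs (nbhs0_lt M_gt0)).
change (f M / M <= h^-1 * (f (h * 1 + M) - f M)).
rewrite mulr1; set r := f M / M.
have fM : f M = r * M by rewrite /r divfK ?gt_eqF.
move: h_small; rewrite ltr_norml => /andP[lt_Mh lt_hM].
case: (ltgtP h 0) h_neq0 => // h_sgn _.
- rewrite ler_ndivlMl // fM.
  have : f (h + M) / (h + M) <= r by apply: convex_ratio_le; lra.
  by rewrite ler_pdivrMr; [nra | lra].
- rewrite ler_pdivlMl // fM.
  have : r <= f (h + M) / (h + M) by apply: convex_ratio_le; lra.
  by rewrite ler_pdivlMr; [nra | lra].
Unshelve. all: by end_near.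
Qed.

Lemma convex_ratio_bounds m M x : 0 < m -> m <= x <= M ->
  f m / m * x <= f x <= f M / M * x.
Proof.
move=> m_gt0 /andP[le_mx le_xM]; have x_gt0 := lt_le_trans m_gt0 le_mx.
have := convex_ratio_le m_gt0 le_mx; have := convex_ratio_le x_gt0 le_xM.
by rewrite (ler_pdivrMr _ _ x_gt0) (ler_pdivlMr _ _ x_gt0) => -> ->.
Qed.

End ConvexVanishingAtZero.

Section ConcaveVanishingAtZero.
Variables (R : realType) (f : R -> R).
Hypotheses (f_concave : concave_nonneg f) (f0 : f 0 = 0).

Let fN_convex : convex_nonneg (- f).
Proof.
by move=> x y t x0 y0 t01; rewrite !opprfctE !mulrN -opprD lerN2 f_concave.
Qed.

Let fN0 : (- f) 0 = 0.
Proof. by rewrite opprfctE f0 oppr0. Qed.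

Lemma concave_ratio_ge x y : 0 < x -> x <= y -> f y / y <= f x / x.
Proof.
by move=> x_gt0 le_xy; have := convex_ratio_le fN_convex fN0 x_gt0 le_xy;
  rewrite /= !mulNr lerN2.
Qed.

Lemma concave_rderive0_ge d0 m : 0 < m ->
  h^-1 * (f h - f 0) @[h --> 0^'+] --> d0 -> f m / m <= d0.
Proof.
move=> m_gt0 df0.
have dfN0 : h^-1 * ((- f) h - (- f) 0) @[h --> 0^'+] --> - d0.
  apply: (cvg_trans _ (cvgN df0)); apply: near_eq_cvg; near=> h.
  by rewrite !opprfctE -opprD mulrN.
have := convex_rderive0_le fN_convex fN0 m_gt0 dfN0.
by rewrite opprfctE mulNr lerN2.
Unshelve. all: by end_near.
Qed.

Lemma concave_derive_le_ratio M : 0 < M -> derivable f M 1 ->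
  derive1 f M <= f M / M.
Proof.
move=> M_gt0 dfM.
have := convex_ratio_le_derive fN_convex fN0 M_gt0 (derivableN dfM).
by rewrite derive1N // /= mulNr lerN2.
Qed.

Lemma concave_ratio_bounds m M x : 0 < m -> m <= x <= M ->
  f M / M * x <= f x <= f m / m * x.
Proof.
move=> m_gt0 /andP[le_mx le_xM]; have x_gt0 := lt_le_trans m_gt0 le_mx.
have := concave_ratio_ge m_gt0 le_mx; have := concave_ratio_ge x_gt0 le_xM.
by rewrite (ler_pdivlMr _ _ x_gt0) (ler_pdivrMr _ _ x_gt0) => -> ->.
Qed.

End ConcaveVanishingAtZero.

Section LoewnerOrder.
Variables (R : realType) (n : nat).
Local Notation C := R[i].
Implicit Types (A B X Y : 'M[C]_n) (v : 'rV[C]_n).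

Definition qform v A : C := (v *m A *m (map_mx Num.conj v)^T) 0 0.

Lemma ctmxK A : ctmx (ctmx A) = A.
Proof. by apply/matrixP => i j; rewrite !mxE conjCK. Qed.

Lemma ctmxM A B : ctmx (A *m B) = ctmx B *m ctmx A.
Proof. by rewrite /ctmx map_mxM trmx_mul. Qed.

Lemma ctmxD A B : ctmx (A + B) = ctmx A + ctmx B.
Proof. by apply/matrixP => i j; rewrite !mxE rmorphD. Qed.

Lemma ctmxZ (a : C) A : ctmx (a *: A) = Num.conj a *: ctmx A.
Proof. by apply/matrixP => i j; rewrite !mxE rmorphM. Qed.

Lemma ctmx_diag (d : 'rV[C]_n) : (forall i, d 0 i \is Num.real) ->
  ctmx (diag_mx d) = diag_mx d.
Proof.
move=> d_real; apply/matrixP => i j; rewrite !mxE eq_sym.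
by case: eqP => [->|_]; rewrite ?mulr1n ?mulr0n ?rmorph0 ?conj_Creal.
Qed.

Lemma ctmx_scalar (a : C) : a \is Num.real -> ctmx (a%:M : 'M[C]_n) = a%:M.
Proof.
move=> a_real; apply/matrixP => i j; rewrite !mxE eq_sym.
by case: (i == j); rewrite ?mulr1n ?mulr0n ?rmorph0 ?conj_Creal.
Qed.

Lemma conj_real_scalar (a : C) : a \is Num.real ->
  forall A, ctmx (a%:M : 'M[C]_n) *m A *m a%:M = (a * a) *: A.
Proof.
by move=> a_real A; rewrite ctmx_scalar // mul_scalar_mx mul_mx_scalar scalerA.
Qed.

Lemma hermitian_ctmxP A : reflect (ctmx A = A) (A \is hermsymmx).
Proof.
apply: (iffP (is_hermitianmxP _ _ _)); rewrite expr0 scale1r => hA.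
  by apply/matrixP => i j; rewrite {2}hA !mxE.
by apply/matrixP => i j; rewrite -{1}hA !mxE.
Qed.

Lemma qformD v A B : qform v (A + B) = qform v A + qform v B.
Proof. by rewrite /qform mulmxDr mulmxDl mxE. Qed.

Lemma qformZ v (a : C) A : qform v (a *: A) = a * qform v A.
Proof. by rewrite /qform -scalemxAr -scalemxAl mxE. Qed.

Lemma qform_conj v X Y : qform v (ctmx X *m Y *m X) = qform (v *m ctmx X) Y.
Proof.
rewrite /qform map_mxM trmx_mul.
by rewrite -[(map_mx _ (ctmx X))^T]/(ctmx (ctmx X)) ctmxK !mulmxA.
Qed.

Lemma qform_delta (i : 'I_n) X : qform (delta_mx 0 i) X = X i i.
Proof.
rewrite /qform -rowE.
have -> : (map_mx Num.conj (delta_mx 0 i : 'rV[C]_n))^T = delta_mx i 0.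
  apply/matrixP => a b; rewrite !mxE andbC.
  by case: (_ && _); rewrite ?rmorph1 ?rmorph0.
by rewrite -colE !mxE.
Qed.

Lemma qform_diag_ge0 v (d : 'rV[C]_n) : (forall i, 0 <= d 0 i) ->
  0 <= qform v (diag_mx d).
Proof.
move=> d_ge0; rewrite /qform mul_mx_diag !mxE; apply: sumr_ge0 => i _.
by rewrite !mxE mulrAC mulr_ge0 ?mul_conjC_ge0.
Qed.

Lemma psdD A B : psdmx A -> psdmx B -> psdmx (A + B).
Proof.
move=> [/hermitian_ctmxP hA qA] [/hermitian_ctmxP hB qB]; split.
  by apply/hermitian_ctmxP; rewrite ctmxD hA hB.
by move=> v; change (0 <= qform v (A + B)); rewrite qformD addr_ge0 ?qA ?qB.
Qed.

Lemma psdZ (a : C) A : 0 <= a -> psdmx A -> psdmx (a *: A).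
Proof.
move=> a_ge0 [/hermitian_ctmxP hA qA]; split.
  by apply/hermitian_ctmxP; rewrite ctmxZ hA conj_Creal ?ger0_real.
by move=> v; change (0 <= qform v (a *: A)); rewrite qformZ mulr_ge0 ?qA.
Qed.

Lemma psd1 : psdmx (1%:M : 'M[C]_n).
Proof.
split=> [|v]; first exact: hermitian1mx_subproof.
have -> : (1%:M : 'M[C]_n) = diag_mx (const_mx 1).
  by apply/matrixP => i j; rewrite !mxE.
by apply: qform_diag_ge0 => i; rewrite mxE.
Qed.

Lemma psd0 : psdmx (0 : 'M[C]_n).
Proof. by rewrite -(scale0r 1%:M); apply: psdZ psd1. Qed.

Lemma pd_psd A : pdmx A -> psdmx A.
Proof.
move=> [hA qA]; split=> // v; have [->|v_neq0] := eqVneq v 0.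
  by rewrite !mul0mx mxE.
exact/ltW/qA.
Qed.

Lemma psd_conj_diag X (d : 'rV[C]_n) : (forall i, 0 <= d 0 i) ->
  psdmx (ctmx X *m diag_mx d *m X).
Proof.
move=> d_ge0; split=> [|v].
  apply/hermitian_ctmxP; rewrite !ctmxM ctmxK ctmx_diag ?mulmxA // => i.
  exact: ger0_real.
change (0 <= qform v (ctmx X *m diag_mx d *m X)).
by rewrite qform_conj qform_diag_ge0.
Qed.

Lemma loewner_trans A B X : loewner A B -> loewner B X -> loewner A X.
Proof.
by rewrite /loewner => AB BX; have := psdD BX AB; rewrite addrA subrK.
Qed.

Lemma loewner_psd A B : psdmx A -> loewner A B -> psdmx B.
Proof. by move=> pA AB; have := psdD AB pA; rewrite subrK. Qed.

Lemma loewnerZ (a : C) A B : 0 <= a -> loewner A B -> loewner (a *: A) (a *: B).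
Proof. by rewrite /loewner -scalerBr; exact: psdZ. Qed.

Lemma loewner_scalel (a b : R) A : psdmx A -> a <= b ->
  loewner ((a%:C)%C *: A) ((b%:C)%C *: A).
Proof.
move=> pA le_ab; rewrite /loewner -scalerBl -rmorphB.
by apply: psdZ; rewrite ?ler0c ?subr_ge0.
Qed.

Section UnitaryConjugation.
Variable U : 'M[C]_n.
Hypothesis U_unitary : U *m ctmx U = 1%:M.

Lemma qform_conj_unitary_delta X i :
  qform (delta_mx 0 i *m U) (ctmx U *m X *m U) = X i i.
Proof. by rewrite qform_conj -mulmxA U_unitary mulmx1 qform_delta. Qed.

Lemma loewner_conj_unitary_diag X Y :
  loewner (ctmx U *m X *m U) (ctmx U *m Y *m U) -> forall i, X i i <= Y i i.
Proof.
move=> [_ qXY] i; have := qXY (delta_mx 0 i *m U).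
change (0 <= qform (delta_mx 0 i *m U)
          (ctmx U *m Y *m U - ctmx U *m X *m U) -> X i i <= Y i i).
by rewrite -mulmxBl -mulmxBr qform_conj_unitary_delta !mxE subr_ge0.
Qed.

End UnitaryConjugation.

Section Spectral.
Variable H : 'M[C]_n.
Hypothesis H_herm : H \is hermsymmx.
Local Notation P := (spectralmx H).
Local Notation D := (spectral_diag H).

Lemma spectralmx_unitary : P *m ctmx P = 1%:M.
Proof. by rewrite /ctmx map_trmx; apply/unitarymxP/spectral_unitarymx. Qed.

Lemma invmx_spectral : invmx P = ctmx P.
Proof. by rewrite invmx_unitary ?spectral_unitarymx // /ctmx map_trmx. Qed.

Lemma spectral_decomposition : H = ctmx P *m diag_mx D *m P.
Proof.
by rewrite -invmx_spectral; apply/orthomx_spectralP/hermitian_normalmx.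
Qed.

Lemma spectral_diag_real i : D 0 i \is Num.real.
Proof. by have /mxOverP := hermitian_spectral_diag_real H_herm; apply. Qed.

Lemma mxfun_spectralE g : mxfun g H =
  ctmx P *m diag_mx (map_mx (fun z : C => ((g (complex.Re z))%:C)%C) D) *m P.
Proof. by rewrite /mxfun invmx_spectral. Qed.

Lemma spec_in_eigenvalues m M : spec_in m M H ->
  forall i, m <= complex.Re (D 0 i) <= M.
Proof.
move=> [mH HM] i.
have conj_scalar (c : C) : ctmx P *m c%:M *m P = c%:M.
  rewrite mul_mx_scalar -scalemxAl -invmx_spectral.
  by rewrite mulVmx ?spectral_unit ?scalemx1.
have lbD := loewner_conj_unitary_diag spectralmx_unitary
  (X := (m%:C)%C%:M) (Y := diag_mx D).
have ubD := loewner_conj_unitary_diag spectralmx_unitary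
  (X := diag_mx D) (Y := (M%:C)%C%:M).
rewrite !conj_scalar -spectral_decomposition in lbD ubD.
move: (lbD mH i) (ubD HM i); rewrite !mxE eqxx !mulr1n.
by rewrite -(RRe_real (spectral_diag_real i)) !lecR => -> ->.
Qed.

Lemma mxfun_le m M (g h : R -> R) : spec_in m M H ->
  (forall x, m <= x <= M -> g x <= h x) -> loewner (mxfun g H) (mxfun h H).
Proof.
move=> sH le_gh; rewrite /loewner !mxfun_spectralE -mulmxBl -mulmxBr.
rewrite -linearB /=.
apply: psd_conj_diag => i; rewrite !mxE -rmorphB ler0c subr_ge0.
exact/le_gh/spec_in_eigenvalues.
Qed.

Lemma mxfun_scale (c : R) : mxfun (fun x => c * x) H = (c%:C)%C *: H.
Proof.
rewrite mxfun_spectralE [in RHS]spectral_decomposition scalemxAl scalemxAr.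
congr (_ *m _ *m _); apply/matrixP => i j; rewrite !mxE mulrnAr rmorphM.
by congr (_ * _ *+ _); exact: RRe_real (spectral_diag_real i).
Qed.

Lemma mxfun_linear_bounds m M (c1 c2 : R) (g : R -> R) : spec_in m M H ->
  (forall x, m <= x <= M -> c1 * x <= g x <= c2 * x) ->
  loewner ((c1%:C)%C *: H) (mxfun g H) /\ loewner (mxfun g H) ((c2%:C)%C *: H).
Proof.
move=> sH g_bounds; rewrite -!mxfun_scale.
by split; apply: mxfun_le sH _ => x /g_bounds /andP[].
Qed.

End Spectral.

End LoewnerOrder.

Arguments psd0 {R n}.
Arguments psd1 {R n}.

Section MatrixMean.
Variables (R : realType) (n : nat).
Local Notation C := R[i].
Variable sigma : 'M[C]_n -> 'M[C]_n -> 'M[C]_n.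
Hypothesis sigma_mean : matrix_mean sigma.
Implicit Types (A B : 'M[C]_n).

Lemma mean_psd A B : psdmx A -> psdmx B -> psdmx (sigma A B).
Proof. by case: sigma_mean => psd_mean _; apply: psd_mean. Qed.

Lemma mean_mono A B A' B' : psdmx A -> psdmx B -> psdmx A' -> psdmx B' ->
  loewner A A' -> loewner B B' -> loewner (sigma A B) (sigma A' B').
Proof. by case: sigma_mean => _ [mono _]; apply: mono. Qed.

Lemma mean_transformer A B (X : 'M[C]_n) : psdmx A -> psdmx B ->
  loewner (ctmx X *m sigma A B *m X)
          (sigma (ctmx X *m A *m X) (ctmx X *m B *m X)).
Proof. by case: sigma_mean => _ [_ [transformer _]]; apply: transformer. Qed.

Lemma mean11 : sigma 1%:M 1%:M = 1%:M.
Proof. by case: sigma_mean => _ [_ [_ []]]. Qed.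

Lemma mean_scale_ge (a : C) A B : 0 <= a -> psdmx A -> psdmx B ->
  loewner (a *: sigma A B) (sigma (a *: A) (a *: B)).
Proof.
move=> a_ge0 pA pB; have sqrt_real : sqrtC a \is Num.real.
  by rewrite ger0_real ?sqrtC_ge0.
have := mean_transformer (sqrtC a)%:M pA pB.
by rewrite !(conj_real_scalar sqrt_real) -expr2 sqrtCK.
Qed.

Lemma mean00_le0 : loewner (sigma 0 0) 0.
Proof.
have := mean_scale_ge (ler0n _ 2) psd0 psd0.
by rewrite !scaler0 /loewner scaler_nat mulr2n opprD addrA subrr add0r.
Qed.

Lemma mean_scale_le (a : C) A B : 0 <= a -> psdmx A -> psdmx B ->
  loewner (sigma (a *: A) (a *: B)) (a *: sigma A B).
Proof.
move=> a_ge0 pA pB; have [->|a_neq0] := eqVneq a 0.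
  by rewrite !scale0r; exact: mean00_le0.
have isqrt_real : (sqrtC a)^-1 \is Num.real.
  by rewrite ger0_real ?invr_ge0 ?sqrtC_ge0.
have := mean_transformer (sqrtC a)^-1%:M (psdZ a_ge0 pA) (psdZ a_ge0 pB).
rewrite !(conj_real_scalar isqrt_real) -invfM -expr2 sqrtCK.
rewrite !scalerA (mulVf a_neq0) !scale1r => /(loewnerZ a_ge0).
by rewrite scalerA (mulfV a_neq0) scale1r.
Qed.

Lemma mean_spec_in m M A B : 0 <= m -> 0 <= M -> psdmx A -> psdmx B ->
  spec_in m M A -> spec_in m M B -> spec_in m M (sigma A B).
Proof.
move=> m_ge0 M_ge0 pA pB [mA AM] [mB BM].
have [mC_ge0 MC_ge0] : 0 <= (m%:C)%C :> C /\ 0 <= (M%:C)%C :> C.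
  by rewrite !ler0c.
have psd_scalar (c : C) : 0 <= c -> psdmx (c%:M : 'M[C]_n).
  by move=> c_ge0; rewrite -scalemx1; exact: psdZ c_ge0 psd1.
have [pm pM] := (psd_scalar _ mC_ge0, psd_scalar _ MC_ge0).
split.
- have := mean_scale_ge mC_ge0 psd1 psd1; rewrite mean11 !scalemx1 => le_m.
  exact: loewner_trans le_m (mean_mono pm pm pA pB mA mB).
- have := mean_scale_le MC_ge0 psd1 psd1; rewrite mean11 !scalemx1 => le_M.
  exact: loewner_trans (mean_mono pA pB pM pM AM BM) le_M.
Qed.

Lemma mean_mxfun_bounds (f : R -> R) m M (c1 c2 : R) A B :
  0 <= c1 -> 0 <= c2 -> psdmx A -> psdmx B -> spec_in m M A -> spec_in m M B ->
  (forall x, m <= x <= M -> c1 * x <= f x <= c2 * x) ->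
  loewner ((c1%:C)%C *: sigma A B) (sigma (mxfun f A) (mxfun f B)) /\
  loewner (sigma (mxfun f A) (mxfun f B)) ((c2%:C)%C *: sigma A B).
Proof.
move=> c1_ge0 c2_ge0 pA pB sA sB f_bounds.
have [c1C_ge0 c2C_ge0] : 0 <= (c1%:C)%C :> C /\ 0 <= (c2%:C)%C :> C.
  by rewrite !ler0c.
have [lbA ubA] := mxfun_linear_bounds pA.1 sA f_bounds.
have [lbB ubB] := mxfun_linear_bounds pB.1 sB f_bounds.
have [c1A c1B] := (psdZ c1C_ge0 pA, psdZ c1C_ge0 pB).
have [c2A c2B] := (psdZ c2C_ge0 pA, psdZ c2C_ge0 pB).
have [fA fB] := (loewner_psd c1A lbA, loewner_psd c1B lbB).
split.
- exact: loewner_trans (mean_scale_ge c1C_ge0 pA pB)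
    (mean_mono c1A c1B fA fB lbA lbB).
- exact: loewner_trans (mean_mono fA fB c2A c2B ubA ubB)
    (mean_scale_le c2C_ge0 pA pB).
Qed.

End MatrixMean.

Theorem theorem2p1 (R : realType) (n : nat) (f : R -> R) (d0 m M : R)
  (sigma : 'M[R[i]]_n -> 'M[R[i]]_n -> 'M[R[i]]_n) :
  (forall x : R, 0 <= x -> 0 <= f x) ->
  f 0 = 0 ->
  (forall x : R, 0 < x -> derivable f x 1) ->
  h^-1 * (f h - f 0) @[h --> 0^'+] --> d0 ->
  0 < m -> m < M ->
  matrix_mean sigma ->
  forall A B : 'M[R[i]]_n,
  pdmx A -> pdmx B -> spec_in m M A -> spec_in m M B ->
  (convex_nonneg f ->
     (loewner ((d0%:C)%C *: sigma A B) (((f m / m)%:C)%C *: sigma A B) /\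
      loewner (((f m / m)%:C)%C *: sigma A B) (sigma (mxfun f A) (mxfun f B)) /\
      loewner (sigma (mxfun f A) (mxfun f B)) (((f M / M)%:C)%C *: sigma A B) /\
      loewner (((f M / M)%:C)%C *: sigma A B) (((derive1 f M)%:C)%C *: sigma A B)) /\
     (loewner ((d0%:C)%C *: sigma A B) (((f m / m)%:C)%C *: sigma A B) /\
      loewner (((f m / m)%:C)%C *: sigma A B) (mxfun f (sigma A B)) /\
      loewner (mxfun f (sigma A B)) (((f M / M)%:C)%C *: sigma A B) /\
      loewner (((f M / M)%:C)%C *: sigma A B) (((derive1 f M)%:C)%C *: sigma A B)))
  /\
  (concave_nonneg f ->
     (loewner (((f m / m)%:C)%C *: sigma A B) ((d0%:C)%C *: sigma A B) /\
      loewner (sigma (mxfun f A) (mxfun f B)) (((f m / m)%:C)%C *: sigma A B) /\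
      loewner (((f M / M)%:C)%C *: sigma A B) (sigma (mxfun f A) (mxfun f B)) /\
      loewner (((derive1 f M)%:C)%C *: sigma A B) (((f M / M)%:C)%C *: sigma A B)) /\
     (loewner (((f m / m)%:C)%C *: sigma A B) ((d0%:C)%C *: sigma A B) /\
      loewner (mxfun f (sigma A B)) (((f m / m)%:C)%C *: sigma A B) /\
      loewner (((f M / M)%:C)%C *: sigma A B) (mxfun f (sigma A B)) /\
      loewner (((derive1 f M)%:C)%C *: sigma A B) (((f M / M)%:C)%C *: sigma A B))).
Proof.
move=> f_ge0 f0 f_der df0 m_gt0 lt_mM sigma_mean A B pdA pdB sA sB.
have M_gt0 := lt_trans m_gt0 lt_mM.
have [psdA psdB] := (pd_psd pdA, pd_psd pdB).
have psdS := mean_psd sigma_mean psdA psdB.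
have sS := mean_spec_in sigma_mean (ltW m_gt0) (ltW M_gt0) psdA psdB sA sB.
have ratio_ge0 x : 0 < x -> 0 <= f x / x.
  by move=> x_gt0; rewrite divr_ge0 ?f_ge0 ?ltW.
have mxfun_bounds c1 c2 : 0 <= c1 -> 0 <= c2 ->
    (forall x, m <= x <= M -> c1 * x <= f x <= c2 * x) ->
    [/\ loewner ((c1%:C)%C *: sigma A B) (sigma (mxfun f A) (mxfun f B)),
        loewner (sigma (mxfun f A) (mxfun f B)) ((c2%:C)%C *: sigma A B),
        loewner ((c1%:C)%C *: sigma A B) (mxfun f (sigma A B)) &
        loewner (mxfun f (sigma A B)) ((c2%:C)%C *: sigma A B)].
  move=> c1_ge0 c2_ge0 f_bounds.
  have [lb1 ub1] :=
    mean_mxfun_bounds sigma_mean c1_ge0 c2_ge0 psdA psdB sA sB f_bounds.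
  have [lb2 ub2] := mxfun_linear_bounds psdS.1 sS f_bounds.
  exact: And4 lb1 ub1 lb2 ub2.
have scaleS := loewner_scalel psdS.
have dfM := f_der _ M_gt0.
split=> [f_convex | f_concave].
- have [lb1 ub1 lb2 ub2] := mxfun_bounds _ _ (ratio_ge0 _ m_gt0)
    (ratio_ge0 _ M_gt0) (fun x => convex_ratio_bounds f_convex f0 m_gt0).
  have d0_le := scaleS _ _ (convex_rderive0_le f_convex f0 m_gt0 df0).
  have le_dM := scaleS _ _ (convex_ratio_le_derive f_convex f0 M_gt0 dfM).
  exact: conj (conj d0_le (conj lb1 (conj ub1 le_dM)))
    (conj d0_le (conj lb2 (conj ub2 le_dM))).
- have [lb1 ub1 lb2 ub2] := mxfun_bounds _ _ (ratio_ge0 _ M_gt0)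
    (ratio_ge0 _ m_gt0) (fun x => concave_ratio_bounds f_concave f0 m_gt0).
  have le_d0 := scaleS _ _ (concave_rderive0_ge f_concave f0 m_gt0 df0).
  have dM_le := scaleS _ _ (concave_derive_le_ratio f_concave f0 M_gt0 dfM).
  exact: conj (conj le_d0 (conj ub1 (conj lb1 dM_le)))
    (conj le_d0 (conj ub2 (conj lb2 dM_le))).
Qed.
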